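(* Let $\gamma:I\to\mathcal S$ be a Legendrian curve whose stress density vanishes identically, and let $t_*\in I$ with $a(t_* )=0$. Then $a^{(n)}(t_* )=0$ for every $n\ge0$.
   Context: Let $\mathbb C^{2,1}$ denote $\mathbb C^3$ with the pseudo-Hermitian form $\langle z,w\rangle=i(\bar z^1w^3-\bar z^3w^1)+\bar z^2w^2$ (conjugate-linear in the first slot); $\mathcal S=\{[z]\in\mathbb{CP}^2:\langle z,z\rangle=0\}$ with contact distribution $\ker\zeta$, $\zeta=-\frac{i}{\bar z^tz}\langle z,dz\rangle|_{T\mathcal S}$. A Legendrian curve is a smooth immersion $\gamma:I\to\mathcal S$ tangent to the contact distribution. A normalized lift is a smooth $\Gamma:I\to\mathbb C^3\setminus\{0\}$ with $\gamma=[\Gamma]$ and $\det(\Gamma,\Gamma',\Gamma'')=i$. The Fubini densities are $a=\mathrm{Im}\langle\Gamma''',\Gamma''\rangle$, $b=\frac12\langle\Gamma'',\Gamma''\rangle$ (independent of the normalized lift). The stress density is $$\begin{aligned}\mathtt t=&\tfrac{4400}{81}aa'^3a''+a^2\big(-\tfrac{400}{27}ba'^3-\tfrac{200}{9}a'a''^2-\tfrac{400}{27}a'^2a'''\big)+a^3\big(\tfrac{25}{3}a'^2b'+\tfrac{50}{3}ba'a''+\tfrac{50}{9}a''a'''+\tfrac{25}{9}a'a^{(4)}\big)\\&+a^4\big(-\tfrac{16}{3}b^2a'-5b'a''-3a'b''-\tfrac{10}{3}ba'''-\tfrac13a^{(5)}\big)+a^5\big(8bb'+b'''\big)-\tfrac{6160}{243}a'^5.\end{aligned}$$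 *)

From Stdlib Require Import Reals.
Open Scope R_scope.

Definition C := (R * R)%type.
Definition Cre (z : C) : R := fst z.
Definition Cim (z : C) : R := snd z.
Definition Cadd (z w : C) : C := (fst z + fst w, snd z + snd w).
Definition Csub (z w : C) : C := (fst z - fst w, snd z - snd w).
Definition Cmul (z w : C) : C :=
  (fst z * fst w - snd z * snd w, fst z * snd w + snd z * fst w).
Definition Cconj (z : C) : C := (fst z, - snd z).
Definition C0 : C := (0, 0).
Definition Ci : C := (0, 1).

Definition V3 := (C * C * C)%type.
Definition c1 (v : V3) : C := fst (fst v).
Definition c2 (v : V3) : C := snd (fst v).
Definition c3 (v : V3) : C := snd v.
Definition Vscale (c : C) (v : V3) : V3 :=
  (Cmul c (c1 v), Cmul c (c2 v), Cmul c (c3 v)).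

(** The pseudo-Hermitian form of C^{2,1}, conjugate-linear in the first slot:
    <z,w> = i (conj z1 w3 - conj z3 w1) + conj z2 w2. *)
Definition herm (z w : V3) : C :=
  Cadd (Cmul Ci (Csub (Cmul (Cconj (c1 z)) (c3 w)) (Cmul (Cconj (c3 z)) (c1 w))))
       (Cmul (Cconj (c2 z)) (c2 w)).

Definition det3 (u v w : V3) : C :=
  Csub (Cadd (Cadd (Cmul (c1 u) (Cmul (c2 v) (c3 w)))
                   (Cmul (c1 v) (Cmul (c2 w) (c3 u))))
             (Cmul (c1 w) (Cmul (c2 u) (c3 v))))
       (Cadd (Cadd (Cmul (c1 w) (Cmul (c2 v) (c3 u)))
                   (Cmul (c1 v) (Cmul (c2 u) (c3 w))))
             (Cmul (c1 u) (Cmul (c2 w) (c3 v)))).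

Definition is_open_interval (I : R -> Prop) : Prop :=
  (exists x, I x) /\
  (forall x y z, I x -> I z -> x <= y <= z -> I y) /\
  (forall x, I x -> exists eps, 0 < eps /\ forall y, Rabs (y - x) < eps -> I y).

(** D k is the k-th derivative of D 0 on I (so D 0 is smooth on I). *)
Definition deriv_seq (I : R -> Prop) (D : nat -> R -> R) : Prop :=
  forall k x, I x -> derivable_pt_lim (D k) x (D (S k) x).

Definition deriv_seq_V (I : R -> Prop) (G : nat -> R -> V3) : Prop :=
  deriv_seq I (fun k t => Cre (c1 (G k t))) /\
  deriv_seq I (fun k t => Cim (c1 (G k t))) /\
  deriv_seq I (fun k t => Cre (c2 (G k t))) /\
  deriv_seq I (fun k t => Cim (c2 (G k t))) /\
  deriv_seq I (fun k t => Cre (c3 (G k t))) /\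
  deriv_seq I (fun k t => Cim (c3 (G k t))).

(** G 0 = Gamma is a normalized lift of a Legendrian curve gamma = [Gamma] : I -> S. *)
Definition normalized_Legendrian_lift (I : R -> Prop) (G : nat -> R -> V3) : Prop :=
  deriv_seq_V I G /\
  (forall t, I t -> G 0%nat t <> (C0, C0, C0)) /\
  (forall t, I t -> herm (G 0%nat t) (G 0%nat t) = C0) /\               (* gamma in S *)
  (forall t, I t -> herm (G 0%nat t) (G 1%nat t) = C0) /\               (* Legendrian: zeta(gamma') = 0 *)
  (forall t, I t -> forall c : C, G 1%nat t <> Vscale c (G 0%nat t)) /\ (* gamma immersion *)
  (forall t, I t -> det3 (G 0%nat t) (G 1%nat t) (G 2%nat t) = Ci).

(** Fubini densities a = Im <Gamma''', Gamma''>, b = 1/2 <Gamma'', Gamma''>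
    (the latter is real; we take its real part). *)
Definition fubini_a (G : nat -> R -> V3) (t : R) : R :=
  Cim (herm (G 3%nat t) (G 2%nat t)).
Definition fubini_b (G : nat -> R -> V3) (t : R) : R :=
  / 2 * Cre (herm (G 2%nat t) (G 2%nat t)).

(** Stress density, with A n = a^(n)(t), B n = b^(n)(t). *)
Definition stress (A B : nat -> R) : R :=
  let a := A 0%nat in let a1 := A 1%nat in let a2 := A 2%nat in
  let a3 := A 3%nat in let a4 := A 4%nat in let a5 := A 5%nat in
  let b := B 0%nat in let b1 := B 1%nat in let b2 := B 2%nat in let b3 := B 3%nat in
  4400/81 * a * a1^3 * a2
  + a^2 * (- (400/27) * b * a1^3 - 200/9 * a1 * a2^2 - 400/27 * a1^2 * a3)
  + a^3 * (25/3 * a1^2 * b1 + 50/3 * b * a1 * a2 + 50/9 * a2 * a3 + 25/9 * a1 * a4)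
  + a^4 * (- (16/3) * b^2 * a1 - 5 * b1 * a2 - 3 * a1 * b2 - 10/3 * b * a3 - 1/3 * a5)
  + a^5 * (8 * b * b1 + b3)
  - 6160/243 * a1^5.

(* Suppose a vanishes at t0 to some finite order m >= 1, i.e. a^(j)(t0) = 0 for j < m.
   Differentiate the identity stress = 0 exactly 5m - 5 times and evaluate at t0.  Every
   monomial of the stress density containing b has five factors a^(k_i) with k_1 + ... + k_5
   <= 3, so it vanishes to order >= 5m - 3 and drops out; the five pure monomials in a
   (k_1 + ... + k_5 = 5) contribute (5m - 5)! c(m) a^(m)(t0)^5, where
   (m!)^5 c(m) = -(4/243) m (4m^4 + 60m^3 + 315m^2 + 675m + 486) < 0.  Hence a^(m)(t0) = 0,
   and induction on m gives the theorem. *)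

From Stdlib Require Import Reals Lra Lia Factorial.
Open Scope R_scope.

Definition dshift (k : nat) (D : nat -> R -> R) : nat -> R -> R := fun n => D (k + n)%nat.
Definition seq_add (D E : nat -> R -> R) : nat -> R -> R := fun n t => D n t + E n t.
Definition seq_scal (c : R) (D : nat -> R -> R) : nat -> R -> R := fun n t => c * D n t.

Fixpoint leibniz (n : nat) (D E : nat -> R -> R) : R -> R :=
  match n with
  | O => fun t => D O t * E O t
  | S n' => fun t => leibniz n' (dshift 1 D) E t + leibniz n' D (dshift 1 E) t
  end.

Definition seq_mul (D E : nat -> R -> R) : nat -> R -> R := fun n => leibniz n D E.

Section DerivSeq.

Variable I : R -> Prop.

Lemma deriv_seq_dshift k D : deriv_seq I D -> deriv_seq I (dshift k D).
Proof.
  intros HD n x Hx. unfold dshift.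
  replace (k + S n)%nat with (S (k + n)) by lia. auto.
Qed.

Lemma deriv_seq_add D E : deriv_seq I D -> deriv_seq I E -> deriv_seq I (seq_add D E).
Proof. intros HD HE n x Hx. apply derivable_pt_lim_plus; auto. Qed.

Lemma deriv_seq_scal c D : deriv_seq I D -> deriv_seq I (seq_scal c D).
Proof. intros HD n x Hx. apply derivable_pt_lim_scal; auto. Qed.

Lemma leibniz_derivable n : forall D E, deriv_seq I D -> deriv_seq I E ->
  forall x, I x -> derivable_pt_lim (leibniz n D E) x (leibniz (S n) D E x).
Proof.
  induction n as [|n IH]; intros D E HD HE x Hx.
  - apply derivable_pt_lim_mult; auto.
  - apply derivable_pt_lim_plus; apply IH; auto using deriv_seq_dshift.
Qed.

Lemma deriv_seq_mul D E : deriv_seq I D -> deriv_seq I E -> deriv_seq I (seq_mul D E).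
Proof. intros HD HE n. apply leibniz_derivable; auto. Qed.

Lemma deriv_seq_identically_zero D : is_open_interval I -> deriv_seq I D ->
  (forall t, I t -> D O t = 0) -> forall n t, I t -> D n t = 0.
Proof.
  intros [_ [_ Hopen]] HD H0 n. induction n as [|n IH]; intros t Ht; auto.
  destruct (Hopen t Ht) as [eps [Heps Hball]].
  apply (uniqueness_limite (D n) t); auto.
  apply (derivable_pt_lim_locally_ext (fct_cte 0) (D n) t (t - eps) (t + eps)); [lra| |].
  - intros z Hz. symmetry. apply IH, Hball, Rabs_def1; lra.
  - apply derivable_pt_lim_const.
Qed.

End DerivSeq.

Definition vanishes_to_order (t0 : R) (D : nat -> R -> R) (p : nat) : Prop :=
  forall j, (j < p)%nat -> D j t0 = 0.

Lemma vanishes_to_order_0 t0 D : vanishes_to_order t0 D 0.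
Proof. intros j Hj. lia. Qed.

Lemma vanishes_to_order_dshift t0 D p k q :
  vanishes_to_order t0 D p -> (q <= p - k)%nat -> vanishes_to_order t0 (dshift k D) q.
Proof. intros HD Hq j Hj. apply HD. lia. Qed.

Lemma leibniz_below_order t0 n : forall D E p q,
  vanishes_to_order t0 D p -> vanishes_to_order t0 E q -> (n < p + q)%nat ->
  leibniz n D E t0 = 0.
Proof.
  induction n as [|n IH]; intros D E p q HD HE Hn; simpl.
  - destruct p.
    + rewrite (HE O) by lia. ring.
    + rewrite (HD O) by lia. ring.
  - rewrite (IH _ _ (p - 1)%nat q), (IH _ _ p (q - 1)%nat);
      try ring; try lia; auto; eapply vanishes_to_order_dshift; eauto; lia.
Qed.

Lemma leibniz_at_order t0 n : forall D E p q,
  vanishes_to_order t0 D p -> vanishes_to_order t0 E q -> (p + q = n)%nat ->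
  leibniz n D E t0 = INR (fact n) / (INR (fact p) * INR (fact q)) * D p t0 * E q t0.
Proof.
  induction n as [|n IH]; intros D E p q HD HE Hn.
  - assert (p = O) by lia. assert (q = O) by lia. subst. simpl. field.
  - simpl leibniz.
    pose proof (INR_fact_neq_0 (S n)). pose proof (INR_fact_neq_0 n).
    destruct p as [|p]; destruct q as [|q]; try lia.
    + rewrite (leibniz_below_order t0 n (dshift 1 D) E O (S q)), (IH D (dshift 1 E) O q);
        try lia; auto using vanishes_to_order_0;
        try (eapply vanishes_to_order_dshift; eauto; lia).
      replace q with n by lia. unfold dshift. change (fact 0) with 1%nat.
      change (1 + n)%nat with (S n). change (INR 1) with 1. field; repeat split; assumption.
    + rewrite (leibniz_below_order t0 n D (dshift 1 E) (S p) O), (IH (dshift 1 D) E p O);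
        try lia; auto using vanishes_to_order_0;
        try (eapply vanishes_to_order_dshift; eauto; lia).
      replace p with n by lia. unfold dshift. change (fact 0) with 1%nat.
      change (1 + n)%nat with (S n). change (INR 1) with 1. field; repeat split; assumption.
    + rewrite (IH (dshift 1 D) E p (S q)), (IH D (dshift 1 E) (S p) q);
        try lia; auto; try (eapply vanishes_to_order_dshift; eauto; lia).
      unfold dshift. simpl plus. replace n with (p + S q)%nat by lia.
      rewrite !fact_simpl, !mult_INR, !S_INR, !plus_INR, !S_INR.
      pose proof (INR_fact_neq_0 p). pose proof (INR_fact_neq_0 q).
      pose proof (pos_INR p). pose proof (pos_INR q).
      field. repeat split; auto; lra.
Qed.

Lemma vanishes_to_order_mul t0 D E p q :
  vanishes_to_order t0 D p -> vanishes_to_order t0 E q ->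
  vanishes_to_order t0 (seq_mul D E) (p + q).
Proof. intros HD HE j Hj. apply (leibniz_below_order t0 j D E p q); auto. Qed.

Lemma seq_mul_at_order t0 D E p q :
  vanishes_to_order t0 D p -> vanishes_to_order t0 E q ->
  seq_mul D E (p + q)%nat t0 =
  INR (fact (p + q)) / (INR (fact p) * INR (fact q)) * D p t0 * E q t0.
Proof. intros. apply leibniz_at_order; auto. Qed.

Definition seq_mul5 (D1 D2 D3 D4 D5 : nat -> R -> R) : nat -> R -> R :=
  seq_mul D1 (seq_mul D2 (seq_mul D3 (seq_mul D4 D5))).

Lemma vanishes_to_order_mul5 t0 D1 D2 D3 D4 D5 p1 p2 p3 p4 p5 :
  vanishes_to_order t0 D1 p1 -> vanishes_to_order t0 D2 p2 -> vanishes_to_order t0 D3 p3 ->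
  vanishes_to_order t0 D4 p4 -> vanishes_to_order t0 D5 p5 ->
  vanishes_to_order t0 (seq_mul5 D1 D2 D3 D4 D5) (p1 + (p2 + (p3 + (p4 + p5)))).
Proof. intros. unfold seq_mul5. repeat apply vanishes_to_order_mul; auto. Qed.

Lemma seq_mul5_at_order t0 D1 D2 D3 D4 D5 p1 p2 p3 p4 p5 :
  vanishes_to_order t0 D1 p1 -> vanishes_to_order t0 D2 p2 -> vanishes_to_order t0 D3 p3 ->
  vanishes_to_order t0 D4 p4 -> vanishes_to_order t0 D5 p5 ->
  seq_mul5 D1 D2 D3 D4 D5 (p1 + (p2 + (p3 + (p4 + p5))))%nat t0 =
  INR (fact (p1 + (p2 + (p3 + (p4 + p5))))) /
    (INR (fact p1) * INR (fact p2) * INR (fact p3) * INR (fact p4) * INR (fact p5))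
  * D1 p1 t0 * D2 p2 t0 * D3 p3 t0 * D4 p4 t0 * D5 p5 t0.
Proof.
  intros. unfold seq_mul5.
  do 4 rewrite seq_mul_at_order by (repeat apply vanishes_to_order_mul; auto).
  pose proof (INR_fact_neq_0 p1). pose proof (INR_fact_neq_0 p2).
  pose proof (INR_fact_neq_0 p3). pose proof (INR_fact_neq_0 p4).
  pose proof (INR_fact_neq_0 p5). pose proof (INR_fact_neq_0 (p4 + p5)).
  pose proof (INR_fact_neq_0 (p3 + (p4 + p5))).
  pose proof (INR_fact_neq_0 (p2 + (p3 + (p4 + p5)))).
  field. repeat split; auto.
Qed.

Definition falling (x : R) : nat -> R :=
  fix f k := match k with O => 1 | S k' => f k' * (x - INR k') end.

(* If a vanishes to order m, then a^(k) vanishes to order m - k with leading derivative a^(m),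
   and taylor_weight m k = 1/(m-k)! is the weight it contributes; for k > m the truncated
   m - k is 0 and a^(k) contributes nothing at the relevant order, hence the weight 0. *)
Definition taylor_weight (m k : nat) : R :=
  if Nat.leb k m then / INR (fact (m - k)) else 0.

Lemma fact_mul_taylor_weight m k : INR (fact m) * taylor_weight m k = falling (INR m) k.
Proof.
  induction k as [|k IH].
  - unfold taylor_weight; simpl. rewrite Nat.sub_0_r. field. apply INR_fact_neq_0.
  - change (falling (INR m) (S k)) with (falling (INR m) k * (INR m - INR k)).
    rewrite <- IH. unfold taylor_weight.
    destruct (Nat.leb_spec (S k) m) as [Hk|Hk].
    + destruct (Nat.leb_spec k m) as [_|]; [|lia].
      replace (m - k)%nat with (S (m - S k)) by lia.
      replace (INR m - INR k) with (INR (S (m - S k))) by (rewrite <- minus_INR by lia; f_equal; lia).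
      rewrite fact_simpl, mult_INR.
      pose proof (INR_fact_neq_0 (m - S k)). pose proof (not_0_INR (S (m - S k)) ltac:(lia)).
      field. auto.
    + destruct (Nat.leb_spec k m) as [Hkm|]; [|ring].
      replace k with m by lia. ring.
Qed.

Section LeadingTerms.

Variables (t0 : R) (A : nat -> R -> R) (m : nat).
Hypothesis A_order : vanishes_to_order t0 A m.

Let dshift_order k : vanishes_to_order t0 (dshift k A) (m - k).
Proof. apply (vanishes_to_order_dshift t0 A m); auto. Qed.

Lemma seq_mul5_dshift_leading k1 k2 k3 k4 k5 : (1 <= m)%nat ->
  (k1 + k2 + k3 + k4 + k5 = 5)%nat ->
  seq_mul5 (dshift k1 A) (dshift k2 A) (dshift k3 A) (dshift k4 A) (dshift k5 A)
    (5 * m - 5)%nat t0 =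
  INR (fact (5 * m - 5)) *
    (taylor_weight m k1 * taylor_weight m k2 * taylor_weight m k3 *
     taylor_weight m k4 * taylor_weight m k5) * A m t0 ^ 5.
Proof.
  intros Hm Hk. unfold taylor_weight.
  destruct (Nat.leb_spec k1 m), (Nat.leb_spec k2 m), (Nat.leb_spec k3 m),
    (Nat.leb_spec k4 m), (Nat.leb_spec k5 m);
  try (rewrite (vanishes_to_order_mul5 t0 _ _ _ _ _ _ _ _ _ _ (dshift_order k1)
         (dshift_order k2) (dshift_order k3) (dshift_order k4) (dshift_order k5));
       [ring | lia]).
  replace (5 * m - 5)%nat
    with ((m - k1) + ((m - k2) + ((m - k3) + ((m - k4) + (m - k5)))))%nat by lia.
  rewrite seq_mul5_at_order by apply dshift_order.
  unfold dshift.
  replace (k1 + (m - k1))%nat with m by lia. replace (k2 + (m - k2))%nat with m by lia.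
  replace (k3 + (m - k3))%nat with m by lia. replace (k4 + (m - k4))%nat with m by lia.
  replace (k5 + (m - k5))%nat with m by lia.
  pose proof (INR_fact_neq_0 (m - k1)). pose proof (INR_fact_neq_0 (m - k2)).
  pose proof (INR_fact_neq_0 (m - k3)). pose proof (INR_fact_neq_0 (m - k4)).
  pose proof (INR_fact_neq_0 (m - k5)).
  field. repeat split; auto.
Qed.

Lemma seq_mul_mul5_dshift_negligible X k1 k2 k3 k4 k5 : (1 <= m)%nat ->
  (k1 + k2 + k3 + k4 + k5 <= 3)%nat ->
  seq_mul (seq_mul5 (dshift k1 A) (dshift k2 A) (dshift k3 A) (dshift k4 A) (dshift k5 A)) X
    (5 * m - 5)%nat t0 = 0.
Proof.
  intros Hm Hk.
  apply (vanishes_to_order_mul t0 _ X _ 0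
    (vanishes_to_order_mul5 t0 _ _ _ _ _ _ _ _ _ _ (dshift_order k1) (dshift_order k2)
       (dshift_order k3) (dshift_order k4) (dshift_order k5))
    (vanishes_to_order_0 t0 X)).
  lia.
Qed.

End LeadingTerms.

Definition stress_leading_coeff (m : nat) : R :=
  let w := taylor_weight m in
  4400/81 * (w 0%nat * w 1%nat * w 1%nat * w 1%nat * w 2%nat)
  - 200/9 * (w 0%nat * w 0%nat * w 1%nat * w 2%nat * w 2%nat)
  - 400/27 * (w 0%nat * w 0%nat * w 1%nat * w 1%nat * w 3%nat)
  + 50/9 * (w 0%nat * w 0%nat * w 0%nat * w 2%nat * w 3%nat)
  + 25/9 * (w 0%nat * w 0%nat * w 0%nat * w 1%nat * w 4%nat)
  - 1/3 * (w 0%nat * w 0%nat * w 0%nat * w 0%nat * w 5%nat)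
  - 6160/243 * (w 1%nat * w 1%nat * w 1%nat * w 1%nat * w 1%nat).

Lemma stress_leading_coeff_poly m :
  INR (fact m) ^ 5 * stress_leading_coeff m =
  - (4/243) * INR m * (4 * INR m ^ 4 + 60 * INR m ^ 3 + 315 * INR m ^ 2 + 675 * INR m + 486).
Proof.
  assert (Hw : forall k, taylor_weight m k = falling (INR m) k / INR (fact m)).
  { intro k. rewrite <- fact_mul_taylor_weight. field. apply INR_fact_neq_0. }
  unfold stress_leading_coeff. rewrite !Hw. simpl falling.
  field. apply INR_fact_neq_0.
Qed.

Lemma stress_leading_coeff_neq0 m : (1 <= m)%nat -> stress_leading_coeff m <> 0.
Proof.
  intros Hm Hc.
  pose proof (stress_leading_coeff_poly m) as Hpoly.
  rewrite Hc, Rmult_0_r in Hpoly.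
  assert (Hx : 1 <= INR m) by (apply (le_INR 1); lia).
  set (x := INR m) in *.
  assert (0 < x ^ 2) by (apply pow_lt; lra).
  assert (0 < x ^ 3) by (apply pow_lt; lra).
  assert (0 < x ^ 4) by (apply pow_lt; lra).
  assert (0 < x * (4 * x ^ 4 + 60 * x ^ 3 + 315 * x ^ 2 + 675 * x + 486))
    by (apply Rmult_lt_0_compat; lra).
  lra.
Qed.

Definition stress_seq (As Bs : nat -> R -> R) : nat -> R -> R :=
  let a k := dshift k As in let b k := dshift k Bs in
  seq_add (seq_scal (4400/81) (seq_mul5 (a 0%nat) (a 1%nat) (a 1%nat) (a 1%nat) (a 2%nat)))
 (seq_add (seq_scal (-(400/27))
    (seq_mul (seq_mul5 (a 0%nat) (a 0%nat) (a 1%nat) (a 1%nat) (a 1%nat)) (b 0%nat)))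
 (seq_add (seq_scal (-(200/9)) (seq_mul5 (a 0%nat) (a 0%nat) (a 1%nat) (a 2%nat) (a 2%nat)))
 (seq_add (seq_scal (-(400/27)) (seq_mul5 (a 0%nat) (a 0%nat) (a 1%nat) (a 1%nat) (a 3%nat)))
 (seq_add (seq_scal (25/3)
    (seq_mul (seq_mul5 (a 0%nat) (a 0%nat) (a 0%nat) (a 1%nat) (a 1%nat)) (b 1%nat)))
 (seq_add (seq_scal (50/3)
    (seq_mul (seq_mul5 (a 0%nat) (a 0%nat) (a 0%nat) (a 1%nat) (a 2%nat)) (b 0%nat)))
 (seq_add (seq_scal (50/9) (seq_mul5 (a 0%nat) (a 0%nat) (a 0%nat) (a 2%nat) (a 3%nat)))
 (seq_add (seq_scal (25/9) (seq_mul5 (a 0%nat) (a 0%nat) (a 0%nat) (a 1%nat) (a 4%nat)))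
 (seq_add (seq_scal (-(16/3))
    (seq_mul (seq_mul5 (a 0%nat) (a 0%nat) (a 0%nat) (a 0%nat) (a 1%nat))
       (seq_mul (b 0%nat) (b 0%nat))))
 (seq_add (seq_scal (-5)
    (seq_mul (seq_mul5 (a 0%nat) (a 0%nat) (a 0%nat) (a 0%nat) (a 2%nat)) (b 1%nat)))
 (seq_add (seq_scal (-3)
    (seq_mul (seq_mul5 (a 0%nat) (a 0%nat) (a 0%nat) (a 0%nat) (a 1%nat)) (b 2%nat)))
 (seq_add (seq_scal (-(10/3))
    (seq_mul (seq_mul5 (a 0%nat) (a 0%nat) (a 0%nat) (a 0%nat) (a 3%nat)) (b 0%nat)))
 (seq_add (seq_scal (-(1/3)) (seq_mul5 (a 0%nat) (a 0%nat) (a 0%nat) (a 0%nat) (a 5%nat)))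
 (seq_add (seq_scal 8
    (seq_mul (seq_mul5 (a 0%nat) (a 0%nat) (a 0%nat) (a 0%nat) (a 0%nat))
       (seq_mul (b 0%nat) (b 1%nat))))
 (seq_add (seq_scal 1
    (seq_mul (seq_mul5 (a 0%nat) (a 0%nat) (a 0%nat) (a 0%nat) (a 0%nat)) (b 3%nat)))
 (seq_scal (-(6160/243))
    (seq_mul5 (a 1%nat) (a 1%nat) (a 1%nat) (a 1%nat) (a 1%nat))))))))))))))))).

Lemma deriv_seq_stress_seq I As Bs :
  deriv_seq I As -> deriv_seq I Bs -> deriv_seq I (stress_seq As Bs).
Proof.
  intros HA HB. unfold stress_seq, seq_mul5.
  repeat first [ apply deriv_seq_add | apply deriv_seq_scal | apply deriv_seq_mul
               | apply deriv_seq_dshift ]; auto.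
Qed.

Lemma stress_seq_0 As Bs t :
  stress_seq As Bs 0%nat t = stress (fun n => As n t) (fun n => Bs n t).
Proof. unfold stress_seq, seq_add, seq_scal, seq_mul5, seq_mul, dshift, stress. simpl. ring. Qed.

Lemma stress_seq_leading As Bs t0 m : (1 <= m)%nat -> vanishes_to_order t0 As m ->
  stress_seq As Bs (5 * m - 5)%nat t0 =
  INR (fact (5 * m - 5)) * stress_leading_coeff m * As m t0 ^ 5.
Proof.
  intros Hm HA. unfold stress_seq, seq_add, seq_scal.
  rewrite !seq_mul_mul5_dshift_negligible by (auto; lia).
  rewrite !seq_mul5_dshift_leading by (auto; lia).
  unfold stress_leading_coeff. ring.
Qed.

Lemma vanishes_all_orders t0 D :
  (forall m, vanishes_to_order t0 D m -> D m t0 = 0) -> forall n, D n t0 = 0.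
Proof.
  intros Hstep.
  assert (Hall : forall m, vanishes_to_order t0 D m).
  { induction m as [|m IH]; [apply vanishes_to_order_0|].
    intros j Hj. destruct (Nat.eq_dec j m) as [->|Hne]; auto. apply IH. lia. }
  intro n. apply (Hall (S n)). lia.
Qed.

Theorem mainTheorem5
  (I : R -> Prop) (G : nat -> R -> V3) (As Bs : nat -> R -> R) (tstar : R) :
  is_open_interval I ->
  normalized_Legendrian_lift I G ->
  deriv_seq I As -> (forall t, I t -> As 0%nat t = fubini_a G t) ->
  deriv_seq I Bs -> (forall t, I t -> Bs 0%nat t = fubini_b G t) ->
  (forall t, I t -> stress (fun n => As n t) (fun n => Bs n t) = 0) ->
  I tstar -> fubini_a G tstar = 0 ->
  forall n : nat, As n tstar = 0.
Proof.
  intros HI _ HA HA0 HB _ Hstress Ht Ha.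
  assert (Hderiv : forall k, stress_seq As Bs k tstar = 0).
  { intro k. apply (deriv_seq_identically_zero I); auto using deriv_seq_stress_seq.
    intros t Hti. rewrite stress_seq_0. auto. }
  apply vanishes_all_orders. intros [|m] Hm.
  - rewrite HA0; auto.
  - pose proof (Hderiv (5 * S m - 5)%nat) as H0.
    rewrite stress_seq_leading in H0 by (auto; lia).
    pose proof (INR_fact_neq_0 (5 * S m - 5)) as Hfact.
    pose proof (stress_leading_coeff_neq0 (S m) ltac:(lia)) as Hcoeff.
    destruct (Req_dec (As (S m) tstar) 0) as [Hz|Hnz]; auto.
    exfalso. apply (pow_nonzero _ 5) in Hnz.
    apply Rmult_integral in H0 as [H0|H0]; auto.
    apply Rmult_integral in H0 as [H0|H0]; auto.
Qed.
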